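(* Let $I=(c,d)$ and $J$ be open intervals of $\mathbb{R}$ with $c\in\mathbb{R}$, let $O=I\times J$, and let $L:O\to\mathbb{R}$, $(x,y)\mapsto L(x,y)$, be of class $C^1$. Let $a<b$, $\alpha,\beta\in\mathbb{R}$, and let $X$ be the set of all $\gamma\in C([a,b])$ which are continuously differentiable on $(a,b]$, satisfy $(\gamma(t),\gamma'(t))\in O$ for all $t\in(a,b]$, $\gamma(a)=\alpha$, $\gamma(b)=\beta$, and for which the (possibly improper) integral $\mathcal{L}(\gamma)=\int_a^b L(\gamma(t),\gamma'(t))\,dt$ is defined. Suppose that $L$ is convex (resp. strictly convex) on $O$, that $\frac{\partial L}{\partial y}$ is bounded on $O$, and that $\gamma\in X$ satisfies the Euler–Lagrange equation $$\frac{\partial L}{\partial x}(\gamma(t),\gamma'(t))=\frac{d}{dt}\,\frac{\partial L}{\partial y}(\gamma(t),\gamma'(t))\quad\text{for all } t\in(a,b].$$ Then $\gamma$ is a minimum (resp. the unique minimum) of $\mathcal{L}$ on $X$.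
   Context: $L$ is called convex on $O$ if for all $x\in O$ and $h\in\mathbb{R}^2$ with $x+h\in O$, one has $L(x+h)-L(x)\ge \frac{\partial L}{\partial x_1}(x)h_1+\frac{\partial L}{\partial x_2}(x)h_2$; it is strictly convex if, in addition, equality holds only when $h=0$. *)

From Stdlib Require Import Reals.
From Coquelicot Require Import Coquelicot.
Open Scope R_scope.

Definition rect (c : R) (d e f : Rbar) (x y : R) : Prop :=
  Rbar_lt c x /\ Rbar_lt x d /\ Rbar_lt e y /\ Rbar_lt y f.

Definition dLx (L : R -> R -> R) (x y : R) : R := Derive (fun u => L u y) x.
Definition dLy (L : R -> R -> R) (x y : R) : R := Derive (fun v => L x v) y.

Definition C1_on (O : R -> R -> Prop) (L : R -> R -> R) : Prop :=
  forall x y, O x y ->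
    ex_derive (fun u => L u y) x /\ ex_derive (fun v => L x v) y /\
    continuous (fun p : R * R => dLx L (fst p) (snd p)) (x, y) /\
    continuous (fun p : R * R => dLy L (fst p) (snd p)) (x, y).

Definition convex_on (O : R -> R -> Prop) (L : R -> R -> R) : Prop :=
  forall x1 x2 h1 h2, O x1 x2 -> O (x1 + h1) (x2 + h2) ->
    L (x1 + h1) (x2 + h2) - L x1 x2 >= dLx L x1 x2 * h1 + dLy L x1 x2 * h2.

Definition strictly_convex_on (O : R -> R -> Prop) (L : R -> R -> R) : Prop :=
  convex_on O L /\
  forall x1 x2 h1 h2, O x1 x2 -> O (x1 + h1) (x2 + h2) ->
    L (x1 + h1) (x2 + h2) - L x1 x2 = dLx L x1 x2 * h1 + dLy L x1 x2 * h2 ->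
    h1 = 0 /\ h2 = 0.

(* continuity / derivative of f at t relative to the set D (one-sided at endpoints) *)
Definition cont_within (D : R -> Prop) (f : R -> R) (t : R) : Prop :=
  filterlim f (within D (locally t)) (locally (f t)).

Definition deriv_within (D : R -> Prop) (f : R -> R) (t l : R) : Prop :=
  filterlim (fun h => (f (t + h) - f t) / h)
    (within (fun h => h <> 0 /\ D (t + h)) (locally 0)) (locally l).

Definition cc (a b : R) (t : R) : Prop := a <= t <= b.
Definition oc (a b : R) (t : R) : Prop := a < t <= b.

(* the (possibly improper at a) integral int_a^b f exists and equals l:
   f is Riemann integrable on every [s,b], a < s <= b, and int_s^b f -> l as s -> a+ *)
Definition impint (f : R -> R) (a b l : R) : Prop :=
  (forall s, a < s <= b -> ex_RInt f s b) /\
  filterlim (fun s => RInt f s b) (at_right a) (locally l).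

Definition action (L : R -> R -> R) (a b : R) (g dg : R -> R) (l : R) : Prop :=
  impint (fun t => L (g t) (dg t)) a b l.

Definition inX (O : R -> R -> Prop) (L : R -> R -> R) (a b alpha beta : R)
    (g dg : R -> R) : Prop :=
  (forall t, cc a b t -> cont_within (cc a b) g t) /\
  (forall t, oc a b t -> deriv_within (cc a b) g t (dg t)) /\
  (forall t, oc a b t -> cont_within (oc a b) dg t) /\
  (forall t, oc a b t -> O (g t) (dg t)) /\
  g a = alpha /\ g b = beta /\
  (exists l, action L a b g dg l).

From Stdlib Require Import Reals Lra.
From Coquelicot Require Import Coquelicot.
Open Scope R_scope.

(* For a competitor h put psi := dLy(g, g') (h - g).  By the Euler-Lagrange
   equation psi' is the first variation dLx(g, g') (h - g) + dLy(g, g') (h' - g'),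
   which by convexity is at most the gap L(h, h') - L(g, g').  Integrating, the
   excess  int_s^b gap + psi(s)  is nonnegative (let the upper end tend to b)
   and nonincreasing in s, and it tends to L(h) - L(g) as s -> a, since psi
   vanishes at both ends: h - g does, and dLy is bounded.  If h is minimal too,
   the excess vanishes identically, so the continuous nonnegative function
   gap - first variation has zero integral on every subinterval, hence is zero,
   and strict convexity forces h = g. *)

Section Limits.

Context {T : Type} {F : (T -> Prop) -> Prop} {FF : Filter F}.

Lemma filterlim_add (u v : T -> R) x y :
  filterlim u F (locally x) -> filterlim v F (locally y) ->
  filterlim (fun t => u t + v t) F (locally (x + y)).
Proof. intros Hu Hv. exact (filterlim_comp_2 _ _ _ Hu Hv (filterlim_plus x y)). Qed.

Lemma filterlim_mul (u v : T -> R) x y :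
  filterlim u F (locally x) -> filterlim v F (locally y) ->
  filterlim (fun t => u t * v t) F (locally (x * y)).
Proof. intros Hu Hv. exact (filterlim_comp_2 _ _ _ Hu Hv (filterlim_mult x y)). Qed.

Lemma filterlim_neg (u : T -> R) x :
  filterlim u F (locally x) -> filterlim (fun t => - u t) F (locally (- x)).
Proof. intros Hu. eapply filterlim_comp; [exact Hu | exact (filterlim_opp x)]. Qed.

Lemma filterlim_sub (u v : T -> R) x y :
  filterlim u F (locally x) -> filterlim v F (locally y) ->
  filterlim (fun t => u t - v t) F (locally (x - y)).
Proof. intros Hu Hv. apply filterlim_add; [exact Hu | exact (filterlim_neg _ _ Hv)]. Qed.

Lemma filterlim_abs (u : T -> R) x :
  filterlim u F (locally x) -> filterlim (fun t => Rabs (u t)) F (locally (Rabs x)).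
Proof. intros Hu. eapply filterlim_comp; [exact Hu | exact (continuous_abs x)]. Qed.

Lemma filterlim_continuous_2 (H : R * R -> R) (u v : T -> R) x y :
  filterlim u F (locally x) -> filterlim v F (locally y) -> continuous H (x, y) ->
  filterlim (fun t => H (u t, v t)) F (locally (H (x, y))).
Proof.
  intros Hu Hv HH. eapply filterlim_comp; [exact (filterlim_pair _ _ Hu Hv) |].
  intros P HP. destruct (HH P HP) as [eps Heps]. exists (ball x eps) (ball y eps).
  - now exists eps.
  - now exists eps.
  - intros p q Hp Hq. now apply (Heps (p, q)).
Qed.

Lemma filterlim_abs_sub_le (u e : T -> R) l :
  F (fun t => Rabs (u t - l) <= e t) -> filterlim e F (locally 0) ->
  filterlim u F (locally l).
Proof.
  intros Hue He.
  apply (filterlim_le_le (fun t => l - e t) u (fun t => l + e t) (Finite l)).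
  - apply (filter_imp _ _ (fun t => proj1 (Rabs_le_between' _ _ _)) Hue).
  - replace (Finite l) with (Finite (l - 0)) by (f_equal; ring).
    apply filterlim_sub; [apply filterlim_const | exact He].
  - replace (Finite l) with (Finite (l + 0)) by (f_equal; ring).
    apply filterlim_add; [apply filterlim_const | exact He].
Qed.

Lemma filterlim_bounded_mul_0 (u v : T -> R) M :
  F (fun t => Rabs (u t) <= M) -> filterlim v F (locally 0) ->
  filterlim (fun t => u t * v t) F (locally 0).
Proof.
  intros Hu Hv. apply (filterlim_abs_sub_le _ (fun t => M * Rabs (v t))).
  - apply (filter_imp (fun t => Rabs (u t) <= M)); [|exact Hu].
    intros t Ht. rewrite Rminus_0_r, Rabs_mult.
    apply Rmult_le_compat_r; [apply Rabs_pos | exact Ht].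
  - rewrite <- (Rmult_0_r M), <- Rabs_R0.
    apply filterlim_mul; [apply filterlim_const | now apply filterlim_abs].
Qed.

End Limits.

Lemma convex_on_tangent_le (O : R -> R -> Prop) (L : R -> R -> R) x y u v :
  convex_on O L -> O x y -> O u v ->
  dLx L x y * (u - x) + dLy L x y * (v - y) <= L u v - L x y.
Proof.
  intros Hcv Oxy Ouv. apply Rge_le.
  replace (L u v) with (L (x + (u - x)) (y + (v - y))) by (f_equal; ring).
  apply Hcv; [exact Oxy|].
  now replace (x + (u - x)) with u by ring; replace (y + (v - y)) with v by ring.
Qed.

Lemma strictly_convex_on_tangent_eq (O : R -> R -> Prop) (L : R -> R -> R) x y u v :
  strictly_convex_on O L -> O x y -> O u v ->
  L u v - L x y = dLx L x y * (u - x) + dLy L x y * (v - y) -> u = x /\ v = y.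
Proof.
  intros [_ Hst] Oxy Ouv Heq.
  replace (L u v) with (L (x + (u - x)) (y + (v - y))) in Heq by (f_equal; ring).
  destruct (Hst x y (u - x) (v - y) Oxy) as [Hu Hv]; [|exact Heq|lra].
  now replace (x + (u - x)) with u by ring; replace (y + (v - y)) with v by ring.
Qed.

Lemma convex_on_Rabs_sub_le (O : R -> R -> Prop) (L : R -> R -> R) x y u v :
  convex_on O L -> O x y -> O u v ->
  Rabs (L u v - L x y) <=
    (Rabs (dLx L x y) + Rabs (dLx L u v)) * Rabs (u - x) +
    (Rabs (dLy L x y) + Rabs (dLy L u v)) * Rabs (v - y).
Proof.
  intros Hcv Oxy Ouv.
  pose proof (convex_on_tangent_le O L x y u v Hcv Oxy Ouv).
  pose proof (convex_on_tangent_le O L u v x y Hcv Ouv Oxy).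
  assert (Hprod : forall p q, 0 <= Rabs p * Rabs q /\ - (Rabs p * Rabs q) <= p * q).
  { intros p q. rewrite <- Rabs_mult.
    exact (conj (Rabs_pos _) (proj1 (proj1 (Rabs_le_between _ _) (Rle_refl _)))). }
  pose proof (Hprod (dLx L x y) (u - x)); pose proof (Hprod (dLy L x y) (v - y)).
  pose proof (Hprod (dLx L u v) (x - u)); pose proof (Hprod (dLy L u v) (y - v)).
  rewrite (Rabs_minus_sym x), (Rabs_minus_sym y) in *.
  apply Rabs_le. lra.
Qed.

(* [C1_on] alone does not make [L] continuous; the convexity inequality does. *)
Lemma filterlim_convex_C1 {T} {F : (T -> Prop) -> Prop} {FF : Filter F}
    (O : R -> R -> Prop) (L : R -> R -> R) (u v : T -> R) x y :
  convex_on O L -> C1_on O L -> O x y -> F (fun t => O (u t) (v t)) ->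
  filterlim u F (locally x) -> filterlim v F (locally y) ->
  filterlim (fun t => L (u t) (v t)) F (locally (L x y)).
Proof.
  intros Hcv HC1 Oxy HO Hu Hv.
  destruct (HC1 x y Oxy) as (_ & _ & HLx & HLy).
  pose proof (filterlim_continuous_2 _ u v x y Hu Hv HLx) as HLxt.
  pose proof (filterlim_continuous_2 _ u v x y Hu Hv HLy) as HLyt.
  simpl in HLxt, HLyt.
  apply (filterlim_abs_sub_le _ (fun t =>
    (Rabs (dLx L x y) + Rabs (dLx L (u t) (v t))) * Rabs (u t - x) +
    (Rabs (dLy L x y) + Rabs (dLy L (u t) (v t))) * Rabs (v t - y))).
  - exact (filter_imp _ _ (fun t Ot => convex_on_Rabs_sub_le O L x y _ _ Hcv Oxy Ot) HO).
  - replace (locally 0) with (locally (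
      (Rabs (dLx L x y) + Rabs (dLx L x y)) * Rabs (x - x) +
      (Rabs (dLy L x y) + Rabs (dLy L x y)) * Rabs (y - y)))
      by (f_equal; rewrite !Rminus_diag, Rabs_R0; ring).
    apply filterlim_add; apply filterlim_mul;
      try (apply filterlim_add; [apply filterlim_const | now apply filterlim_abs]);
      apply filterlim_abs, filterlim_sub; auto; apply filterlim_const.
Qed.

Lemma locally_interior a b t : a < t < b -> locally t (fun s => a < s < b).
Proof.
  intros Ht. apply (locally_interval _ t a b); simpl; try lra. intros s Has Hsb. now split.
Qed.

Lemma at_right_interval a b : a < b -> at_right a (fun s => a < s < b).
Proof.
  intros Hab. unfold at_right, within.
  apply (filter_imp (fun s => s < b)); [now split|].
  apply (locally_interval _ a m_infty b); easy.
Qed.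

Lemma at_left_interval a b : a < b -> at_left b (fun s => a < s < b).
Proof.
  intros Hab. unfold at_left, within.
  apply (filter_imp (fun s => a < s)); [now split|].
  apply (locally_interval _ b a p_infty); easy.
Qed.

Lemma filter_le_locally_within (D : R -> Prop) t :
  locally t D -> filter_le (locally t) (within D (locally t)).
Proof.
  intros HD P HP. unfold within in *.
  apply (filter_imp (fun s => D s /\ (D s -> P s))); [intros s [Hs HPs]; now apply HPs|].
  now apply filter_and.
Qed.

Lemma filter_le_within_locally (D1 D2 : R -> Prop) t :
  locally t (fun s => D2 s -> D1 s) ->
  filter_le (within D2 (locally t)) (within D1 (locally t)).
Proof.
  intros H12 P HP. unfold within in *.
  apply (filter_imp (fun s => (D2 s -> D1 s) /\ (D1 s -> P s)));
    [intros s [H HPs] Hs; now apply HPs, H|].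
  now apply filter_and.
Qed.

Lemma cont_within_continuous (D : R -> Prop) f a b t :
  a < t < b -> (forall s, a < s < b -> D s) -> cont_within D f t -> continuous f t.
Proof.
  intros Ht HD Hf. eapply filterlim_filter_le_1; [|exact Hf].
  apply filter_le_locally_within, (filter_imp _ _ HD), locally_interior, Ht.
Qed.

Lemma deriv_within_is_derive (D : R -> Prop) f a b t l :
  a < t < b -> (forall s, a < s < b -> D s) -> deriv_within D f t l -> is_derive f t l.
Proof.
  intros Ht HD Hf. apply is_derive_Reals. intros eps Heps.
  destruct (proj1 (filterlim_locally _ _) Hf (mkposreal eps Heps)) as [del Hdel].
  assert (Hr : 0 < Rmin del (Rmin (t - a) (b - t))).
  { pose proof (cond_pos del). repeat apply Rmin_pos; lra. }
  exists (mkposreal _ Hr). intros r Hr0 Hr_small. simpl in Hr_small.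
  pose proof (Rmin_l del (Rmin (t - a) (b - t))).
  pose proof (Rmin_r del (Rmin (t - a) (b - t))).
  pose proof (Rmin_l (t - a) (b - t)); pose proof (Rmin_r (t - a) (b - t)).
  apply (Hdel r).
  - change (Rabs (r - 0) < del). rewrite Rminus_0_r. lra.
  - split; [exact Hr0|]. apply HD. apply Rabs_def2 in Hr_small. lra.
Qed.

Lemma at_left_forall_between (P : R -> Prop) b :
  locally b P -> at_left b (fun s => forall t, s <= t <= b -> P t).
Proof.
  intros [del Hdel]. exists del. intros s Hs Hsb t Ht. apply Hdel.
  change (Rabs (s - b) < del) in Hs. change (Rabs (t - b) < del).
  rewrite Rabs_left1 in * by lra. lra.
Qed.

Lemma filterlim_RInt_upper_end (f : R -> R) b K :
  at_left b (fun s => ex_RInt f s b /\ forall t, s <= t <= b -> Rabs (f t) <= K) ->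
  filterlim (fun s => RInt f s b) (at_left b) (locally 0).
Proof.
  intros Hf. apply (filterlim_abs_sub_le _ (fun s => (b - s) * K)).
  - apply (filter_imp
      (fun s => s < b /\ ex_RInt f s b /\ forall t, s <= t <= b -> Rabs (f t) <= K)).
    + intros s (Hsb & Hint & HK). rewrite Rminus_0_r.
      apply abs_RInt_le_const; auto; lra.
    + apply filter_and; [|exact Hf]. unfold at_left, within. apply filter_forall. now intros s Hs.
  - replace (locally 0) with (locally ((b - b) * K)) by (f_equal; ring).
    apply filterlim_mul; [|apply filterlim_const].
    apply filterlim_sub; [apply filterlim_const|].
    eapply filterlim_filter_le_1; [apply filter_le_within | apply filterlim_id].
Qed.

Lemma continuous_nonneg_RInt_eq_0 (k : R -> R) a b t :
  a < t < b -> continuous k t -> (forall s, a < s < b -> 0 <= k s) ->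
  (forall s u, a < s -> s < u -> u < b -> ex_RInt k s u /\ RInt k s u = 0) -> k t = 0.
Proof.
  intros Ht Hc Hpos Hint.
  destruct (Rle_lt_or_eq_dec 0 (k t) (Hpos t Ht)) as [Hkt|]; [exfalso|easy].
  assert (Hnear : locally t (fun s => a < s < b /\ k t / 2 < k s)).
  { apply filter_and; [now apply locally_interior|].
    apply (filter_imp (fun s => ball (k t) (k t / 2) (k s))).
    - intros s Hs. change (Rabs (k s - k t) < k t / 2) in Hs.
      apply Rabs_def2 in Hs. lra.
    - apply Hc. assert (Hk2 : 0 < k t / 2) by lra. now exists (mkposreal _ Hk2). }
  destruct Hnear as [del Hdel].
  set (r := del / 2).
  assert (Hin : forall s, t - r <= s <= t + r -> a < s < b /\ k t / 2 < k s).
  { intros s Hs. apply Hdel. change (Rabs (s - t) < del).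
    pose proof (cond_pos del). unfold r in Hs. apply Rabs_def1; lra. }
  assert (Hr : 0 < r) by (pose proof (cond_pos del); unfold r; lra).
  assert (Hends : a < t - r /\ t + r < b).
  { pose proof (Hin (t - r)); pose proof (Hin (t + r)). split; lra. }
  destruct (Hint (t - r) (t + r)) as [Hex H0]; [lra.. |].
  assert (Hlow : RInt (fun _ => k t / 2) (t - r) (t + r) <= RInt k (t - r) (t + r)).
  { apply RInt_le; [lra | apply ex_RInt_const | exact Hex |].
    intros s Hs. apply Rlt_le, Hin. lra. }
  rewrite RInt_const, H0 in Hlow. change (scal ?x ?y) with (x * y) in Hlow.
  nra.
Qed.

Section AdmissibleCurve.

Variables (O : R -> R -> Prop) (L : R -> R -> R) (a b alpha beta : R) (k dk : R -> R).
Hypothesis Hab : a < b.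
Hypothesis Xk : inX O L a b alpha beta k dk.

Lemma inX_in_O t : oc a b t -> O (k t) (dk t).
Proof. intros Ht. destruct Xk as (_ & _ & _ & HO & _). exact (HO t Ht). Qed.

Lemma inX_continuous t : a < t < b -> continuous k t.
Proof.
  destruct Xk as (Hc & _). intros Ht.
  apply (cont_within_continuous (cc a b) k a b t Ht); [intros s Hs; red; lra|].
  apply Hc. red; lra.
Qed.

Lemma inX_continuous_deriv t : a < t < b -> continuous dk t.
Proof.
  destruct Xk as (_ & _ & Hc & _). intros Ht.
  apply (cont_within_continuous (oc a b) dk a b t Ht); [intros s Hs; red; lra|].
  apply Hc. red; lra.
Qed.

Lemma inX_is_derive t : a < t < b -> is_derive k t (dk t).
Proof.
  destruct Xk as (_ & Hd & _). intros Ht.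
  apply (deriv_within_is_derive (cc a b) k a b t (dk t) Ht); [intros s Hs; red; lra|].
  apply Hd. red; lra.
Qed.

Lemma inX_lim_right_of_a : filterlim k (at_right a) (locally alpha).
Proof.
  destruct Xk as (Hc & _ & _ & _ & Ha & _). rewrite <- Ha.
  eapply filterlim_filter_le_1; [|apply Hc; red; lra].
  apply filter_le_within_locally. change (at_right a (cc a b)).
  apply (filter_imp (fun s => a < s < b)); [intros s Hs; red; lra | now apply at_right_interval].
Qed.

Lemma inX_lim_left_of_b : filterlim k (at_left b) (locally beta).
Proof.
  destruct Xk as (Hc & _ & _ & _ & _ & Hb & _). rewrite <- Hb.
  eapply filterlim_filter_le_1; [|apply Hc; red; lra].
  apply filter_le_within_locally. change (at_left b (cc a b)).
  apply (filter_imp (fun s => a < s < b)); [intros s Hs; red; lra | now apply at_left_interval].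
Qed.

Hypothesis Hconv : convex_on O L.
Hypothesis HC1 : C1_on O L.

Lemma inX_continuous_lagrangian t : a < t < b -> continuous (fun s => L (k s) (dk s)) t.
Proof.
  intros Ht. apply (filterlim_convex_C1 O L k dk); auto.
  - apply inX_in_O. red; lra.
  - apply (filter_imp (fun s => a < s < b)); [intros s Hs; apply inX_in_O; red; lra|].
    now apply locally_interior.
  - now apply inX_continuous.
  - now apply inX_continuous_deriv.
Qed.

Lemma inX_cont_within_lagrangian_b :
  cont_within (oc a b) (fun s => L (k s) (dk s)) b.
Proof.
  destruct Xk as (Hc & _ & Hdc & _).
  assert (Hb : oc a b b) by (red; lra).
  apply (filterlim_convex_C1 O L k dk); auto.
  - now apply inX_in_O.
  - unfold within. apply filter_forall. exact inX_in_O.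
  - eapply filterlim_filter_le_1; [|apply Hc; red; lra].
    apply filter_le_within_locally, filter_forall. intros s Hs. red in Hs |- *. lra.
  - now apply Hdc.
Qed.

End AdmissibleCurve.

Definition boundary_term (L : R -> R -> R) (g dg h : R -> R) (t : R) : R :=
  dLy L (g t) (dg t) * (h t - g t).

Definition first_variation (L : R -> R -> R) (g dg h dh : R -> R) (t : R) : R :=
  dLx L (g t) (dg t) * (h t - g t) + dLy L (g t) (dg t) * (dh t - dg t).

Definition lagrangian_gap (L : R -> R -> R) (g dg h dh : R -> R) (t : R) : R :=
  L (h t) (dh t) - L (g t) (dg t).

Section Comparison.

Variables (O : R -> R -> Prop) (L : R -> R -> R) (a b alpha beta M : R).
Variables (g dg h dh : R -> R).
Hypothesis Hconv : convex_on O L.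
Hypothesis HC1 : C1_on O L.
Hypothesis Hab : a < b.
Hypothesis HM : forall x y, O x y -> Rabs (dLy L x y) <= M.
Hypothesis Xg : inX O L a b alpha beta g dg.
Hypothesis Xh : inX O L a b alpha beta h dh.
Hypothesis HEL : forall t, oc a b t ->
  deriv_within (oc a b) (fun s => dLy L (g s) (dg s)) t (dLx L (g t) (dg t)).

Local Notation psi := (boundary_term L g dg h).
Local Notation dpsi := (first_variation L g dg h dh).
Local Notation gap := (lagrangian_gap L g dg h dh).

Lemma first_variation_le_gap t : oc a b t -> dpsi t <= gap t.
Proof.
  intros Ht. apply (convex_on_tangent_le O); [exact Hconv|..]; eapply inX_in_O; eauto.
Qed.

Lemma is_derive_boundary_term t : a < t < b -> is_derive psi t (dpsi t).
Proof.
  intros Ht.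
  assert (Hp : is_derive (fun s => dLy L (g s) (dg s)) t (dLx L (g t) (dg t))).
  { apply (deriv_within_is_derive (oc a b) _ a b t _ Ht); [intros s Hs; red; lra|].
    apply HEL. red; lra. }
  assert (Hq : is_derive (fun s => h s - g s) t (dh t - dg t)).
  { apply (is_derive_minus h g); eapply inX_is_derive; eauto. }
  apply (is_derive_mult _ _ _ _ _ Hp Hq). intros; apply Rmult_comm.
Qed.

Lemma continuous_first_variation t : a < t < b -> continuous dpsi t.
Proof.
  intros Ht.
  assert (Hgt : continuous g t) by (eapply inX_continuous; eauto).
  assert (Hdgt : continuous dg t) by (eapply inX_continuous_deriv; eauto).
  assert (Hht : continuous h t) by (eapply inX_continuous; eauto).
  assert (Hdht : continuous dh t) by (eapply inX_continuous_deriv; eauto).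
  assert (Ot : O (g t) (dg t)) by (eapply inX_in_O; eauto; red; lra).
  destruct (HC1 _ _ Ot) as (_ & _ & HLx & HLy).
  apply filterlim_add; apply filterlim_mul; try apply filterlim_sub; try easy.
  - exact (filterlim_continuous_2 _ g dg _ _ Hgt Hdgt HLx).
  - exact (filterlim_continuous_2 _ g dg _ _ Hgt Hdgt HLy).
Qed.

Lemma continuous_lagrangian_gap t : a < t < b -> continuous gap t.
Proof.
  intros Ht. apply filterlim_sub; eapply inX_continuous_lagrangian; eauto.
Qed.

Lemma ex_RInt_lagrangian_gap s u : a < s -> s <= u -> u <= b -> ex_RInt gap s u.
Proof.
  intros Has Hsu Hub.
  destruct Xg as (_ & _ & _ & _ & _ & _ & lg & Ig & _).
  destruct Xh as (_ & _ & _ & _ & _ & _ & lh & Ih & _).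
  apply (@ex_RInt_Chasles_1 R_CompleteNormedModule _ s u b); [lra|].
  apply (ex_RInt_minus (fun t => L (h t) (dh t)) (fun t => L (g t) (dg t))).
  - apply Ih; lra.
  - apply Ig; lra.
Qed.

Lemma is_RInt_first_variation s u :
  a < s -> s <= u -> u < b -> is_RInt dpsi s u (psi u - psi s).
Proof.
  intros Has Hsu Hub.
  apply (is_RInt_derive psi dpsi); rewrite Rmin_left, Rmax_right by lra; intros t Ht.
  - apply is_derive_boundary_term; lra.
  - apply continuous_first_variation; lra.
Qed.

Lemma boundary_term_le_RInt_gap s u :
  a < s -> s <= u -> u < b -> psi u - psi s <= RInt gap s u.
Proof.
  intros Has Hsu Hub.
  rewrite <- (is_RInt_unique _ _ _ _ (is_RInt_first_variation s u Has Hsu Hub)).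
  apply RInt_le; [exact Hsu | eexists; now apply is_RInt_first_variation |
    apply ex_RInt_lagrangian_gap; lra |].
  intros t Ht. apply first_variation_le_gap. red; lra.
Qed.

(* The bound on [dLy] is what controls the boundary term at [a], where
   [dg] need not converge. *)
Lemma filterlim_boundary_term (F : (R -> Prop) -> Prop) {FF : Filter F} x :
  F (oc a b) -> filterlim g F (locally x) -> filterlim h F (locally x) ->
  filterlim psi F (locally 0).
Proof.
  intros Hoc Hg Hh. apply (filterlim_bounded_mul_0 _ _ M).
  - apply (filter_imp _ _ (fun t Ht => HM _ _ (inX_in_O _ _ _ _ _ _ _ _ Xg t Ht)) Hoc).
  - rewrite <- (Rminus_diag x). now apply filterlim_sub.
Qed.

Lemma boundary_term_lim_a : filterlim psi (at_right a) (locally 0).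
Proof.
  apply (filterlim_boundary_term _ alpha);
    [| eapply inX_lim_right_of_a; eauto | eapply inX_lim_right_of_a; eauto].
  apply (filter_imp (fun s => a < s < b)); [intros s Hs; red; lra | now apply at_right_interval].
Qed.

Lemma boundary_term_lim_b : filterlim psi (at_left b) (locally 0).
Proof.
  apply (filterlim_boundary_term _ beta);
    [| eapply inX_lim_left_of_b; eauto | eapply inX_lim_left_of_b; eauto].
  apply (filter_imp (fun s => a < s < b)); [intros s Hs; red; lra | now apply at_left_interval].
Qed.

Lemma RInt_lagrangian_gap_lim_b :
  filterlim (fun u => RInt gap u b) (at_left b) (locally 0).
Proof.
  apply (filterlim_RInt_upper_end _ _ (Rabs (gap b) + 1)).
  assert (Hcont : cont_within (oc a b) gap b).
  { apply filterlim_sub; eapply inX_cont_within_lagrangian_b; eauto. }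
  assert (Hnear : locally b (fun t => a < t /\ (oc a b t -> ball (gap b) 1 (gap t)))).
  { apply filter_and; [apply (locally_interval _ b a p_infty); easy|].
    apply Hcont. now exists (mkposreal 1 Rlt_0_1). }
  generalize (at_left_forall_between _ _ Hnear). unfold at_left, within.
  apply filter_imp. intros u Hu Hub. specialize (Hu Hub).
  destruct (Hu u (conj (Rle_refl u) (Rlt_le _ _ Hub))) as [Hau _].
  split; [apply ex_RInt_lagrangian_gap; lra|].
  intros t Ht. destruct (Hu t Ht) as [Hat Hball].
  specialize (Hball (conj Hat (proj2 Ht))). change (Rabs (gap t - gap b) < 1) in Hball.
  pose proof (Rabs_triang_inv (gap t) (gap b)). lra.
Qed.

Local Notation excess s := (RInt gap s b + psi s).

Lemma RInt_lagrangian_gap_Chasles s u :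
  a < s -> s <= u -> u <= b -> RInt gap s b = RInt gap s u + RInt gap u b.
Proof.
  intros Has Hsu Hub. symmetry.
  apply (RInt_Chasles gap); apply ex_RInt_lagrangian_gap; lra.
Qed.

Lemma excess_nonincreasing s u : a < s -> s <= u -> u < b -> excess u <= excess s.
Proof.
  intros Has Hsu Hub. rewrite (RInt_lagrangian_gap_Chasles s u) by lra.
  pose proof (boundary_term_le_RInt_gap s u Has Hsu Hub). lra.
Qed.

Lemma excess_nonneg s : a < s < b -> 0 <= excess s.
Proof.
  intros Hs.
  apply (filterlim_le (F := at_left b) (fun u => excess u) (fun _ => excess s) 0 (excess s)).
  - apply (filter_imp (fun u => s < u < b)); [|now apply at_left_interval].
    intros u Hu. apply excess_nonincreasing; lra.
  - rewrite <- (Rplus_0_r 0).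
    apply filterlim_add; [apply RInt_lagrangian_gap_lim_b | apply boundary_term_lim_b].
  - apply filterlim_const.
Qed.

Lemma excess_lim_a lg lh : action L a b g dg lg -> action L a b h dh lh ->
  filterlim (fun s => excess s) (at_right a) (locally (lh - lg)).
Proof.
  intros [Ig Hlg] [Ih Hlh].
  rewrite <- (Rplus_0_r (lh - lg)). apply filterlim_add; [|exact boundary_term_lim_a].
  apply (filterlim_ext_loc (fun s => RInt (fun t => L (h t) (dh t)) s b -
                                     RInt (fun t => L (g t) (dg t)) s b)).
  - apply (filter_imp (fun s => a < s < b)); [|exact (at_right_interval a b Hab)].
    intros s Hs. symmetry. apply (RInt_minus (fun t => L (h t) (dh t))).
    + apply Ih; lra.
    + apply Ig; lra.
  - now apply filterlim_sub.
Qed.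

Lemma action_le lg lh : action L a b g dg lg -> action L a b h dh lh -> lg <= lh.
Proof.
  intros Hg Hh.
  apply Rminus_le_0.
  apply (filterlim_le (F := at_right a) (fun _ => 0) (fun s => excess s) 0 (lh - lg)).
  - exact (filter_imp _ _ excess_nonneg (at_right_interval a b Hab)).
  - apply filterlim_const.
  - now apply excess_lim_a.
Qed.

Lemma excess_eq_0 lg lh : action L a b g dg lg -> action L a b h dh lh -> lh <= lg ->
  forall s, a < s < b -> excess s = 0.
Proof.
  intros Hg Hh Hle s Hs. apply Rle_antisym; [|now apply excess_nonneg].
  enough (excess s <= lh - lg) by lra.
  apply (filterlim_le (F := at_right a)
    (fun _ => excess s) (fun u => excess u) (excess s) (lh - lg)).
  - apply (filter_imp (fun u => a < u < s)); [|now apply at_right_interval].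
    intros u Hu. apply excess_nonincreasing; lra.
  - apply filterlim_const.
  - now apply excess_lim_a.
Qed.

Lemma lagrangian_gap_eq_first_variation lg lh :
  action L a b g dg lg -> action L a b h dh lh -> lh <= lg ->
  forall t, a < t < b -> gap t = dpsi t.
Proof.
  intros Hg Hh Hle t Ht. apply Rminus_diag_uniq.
  apply (continuous_nonneg_RInt_eq_0 (fun s => gap s - dpsi s) a b t Ht).
  - apply filterlim_sub; [apply continuous_lagrangian_gap | apply continuous_first_variation];
      exact Ht.
  - intros s Hs. pose proof (first_variation_le_gap s ltac:(red; lra)). lra.
  - intros s u Has Hsu Hub.
    assert (Hgap := ex_RInt_lagrangian_gap s u Has (Rlt_le _ _ Hsu) (Rlt_le _ _ Hub)).
    assert (Hdpsi := is_RInt_first_variation s u Has (Rlt_le _ _ Hsu) Hub).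
    assert (Hdpsi_ex : ex_RInt dpsi s u) by (eexists; exact Hdpsi).
    split; [exact (ex_RInt_minus gap dpsi s u Hgap Hdpsi_ex)|].
    rewrite (RInt_minus gap dpsi) by easy. rewrite (is_RInt_unique _ _ _ _ Hdpsi).
    pose proof (excess_eq_0 lg lh Hg Hh Hle s ltac:(lra)).
    pose proof (excess_eq_0 lg lh Hg Hh Hle u ltac:(lra)).
    pose proof (RInt_lagrangian_gap_Chasles s u Has (Rlt_le _ _ Hsu) (Rlt_le _ _ Hub)).
    unfold minus, plus, opp; simpl. lra.
Qed.

Lemma eq_of_action_le lg lh : strictly_convex_on O L ->
  action L a b g dg lg -> action L a b h dh lh -> lh <= lg ->
  forall t, cc a b t -> h t = g t.
Proof.
  intros Hstrict Hg Hh Hle t [Hat Htb].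
  destruct Xg as (_ & _ & _ & _ & Hga & Hgb & _).
  destruct Xh as (_ & _ & _ & _ & Hha & Hhb & _).
  destruct (Rle_lt_or_eq_dec _ _ Hat) as [Hat_lt | <- ]; [|congruence].
  destruct (Rle_lt_or_eq_dec _ _ Htb) as [Htb_lt | -> ]; [|congruence].
  assert (Ht : oc a b t) by (red; lra).
  apply (strictly_convex_on_tangent_eq O L (g t) (dg t) (h t) (dh t) Hstrict);
    [eapply inX_in_O; eauto | eapply inX_in_O; eauto |].
  exact (lagrangian_gap_eq_first_variation lg lh Hg Hh Hle t (conj Hat_lt Htb_lt)).
Qed.

End Comparison.

Theorem proposition2 (c : R) (d e f : Rbar) (L : R -> R -> R)
  (a b alpha beta : R) (g dg : R -> R) :
  C1_on (rect c d e f) L ->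
  a < b ->
  (exists M, forall x y, rect c d e f x y -> Rabs (dLy L x y) <= M) ->
  inX (rect c d e f) L a b alpha beta g dg ->
  (forall t, oc a b t ->
     deriv_within (oc a b) (fun s => dLy L (g s) (dg s)) t (dLx L (g t) (dg t))) ->
  (convex_on (rect c d e f) L ->
     forall lg, action L a b g dg lg ->
     forall h dh lh, inX (rect c d e f) L a b alpha beta h dh ->
       action L a b h dh lh -> lg <= lh) /\
  (strictly_convex_on (rect c d e f) L ->
     (forall lg, action L a b g dg lg ->
      forall h dh lh, inX (rect c d e f) L a b alpha beta h dh ->
        action L a b h dh lh -> lg <= lh) /\
     (forall h dh lh, inX (rect c d e f) L a b alpha beta h dh ->
        action L a b h dh lh ->
        (forall k dk lk, inX (rect c d e f) L a b alpha beta k dk ->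
           action L a b k dk lk -> lh <= lk) ->
        forall t, cc a b t -> h t = g t)).
Proof.
  intros HC1 Hab [M HM] Xg HEL.
  assert (Hmin : convex_on (rect c d e f) L ->
     forall lg, action L a b g dg lg ->
     forall h dh lh, inX (rect c d e f) L a b alpha beta h dh ->
       action L a b h dh lh -> lg <= lh).
  { intros Hconv lg Hg h dh lh Xh Hh.
    exact (action_le _ _ _ _ _ _ _ _ _ _ _ Hconv HC1 Hab HM Xg Xh HEL lg lh Hg Hh). }
  split; [exact Hmin|]. intros Hstrict. split; [exact (Hmin (proj1 Hstrict))|].
  intros h dh lh Xh Hh Hhmin.
  pose proof Xg as (_ & _ & _ & _ & _ & _ & lg & Hg).
  exact (eq_of_action_le _ _ _ _ _ _ _ _ _ _ _ (proj1 Hstrict) HC1 Hab HM Xg Xh HEL lg lh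
    Hstrict Hg Hh (Hhmin g dg lg Xg Hg)).
Qed.
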